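(* Let $f\neq 0$ and $\mu\in\mathbb{R}$ with $\mu\notin\{0,1,-1\}$. Consider the plane curve $\gamma(\xi)=\big(r(\xi)\cos\xi,\ r(\xi)\sin\xi\big)$, where $$r(\xi)=f\left(\mu\cos\xi+\sqrt{2-\cos^2\xi}\right),$$ traversed in the direction of increasing $\xi$, and let $k(\xi)$ denote its signed curvature with respect to this orientation. Then: (i) At $\xi=0$ the curve passes through $(f(\mu+1),0)$ with unit tangent $(\cos\tau,\sin\tau)$, $\tau=\frac{\pi}{2}\,\mathrm{sgn}[f(\mu+1)]$, and curvature $k(0)=\dfrac{2\mu}{|f|\,|\mu+1|\,(\mu+1)}$; at $\xi=\pi$ it passes through $(f(\mu-1),0)$ with tangent angle $\tau=\frac{\pi}{2}\,\mathrm{sgn}[f(\mu-1)]$ and curvature $k(\pi)=\dfrac{2\mu}{|f|\,|\mu-1|\,(\mu-1)}$. (ii) The circles of curvature (osculating circles) of the curve at the points $\xi=0$ and $\xi=\pi$ are concentric, with common center $\left(f\,\dfrac{\mu^2-1}{2\mu},\,0\right)$. (iii) If $|\mu|>1$ (so that $k(0)$ and $k(\pi)$ have the same sign), then along the arc $0\le\xi\le\pi$ the curvature varies monotonically with arc length, and the total turning angle of the tangent along this arc is $2\pi$.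
   Context: Signed curvature of a regular parametrized plane curve $(x(\xi),y(\xi))$ is $k=(x'y''-y'x'')/(x'^2+y'^2)^{3/2}$. The curve is the one given in implicit form by $\left(x^2+y^2-\mu f x\right)^2=f^2(x^2+2y^2)$. The ''circle of curvature'' at a point is the circle tangent to the curve there with radius $1/|k|$ and center on the normal on the side of curvature. *)

From Stdlib Require Import Reals.
From Coquelicot Require Import Coquelicot.
Open Scope R_scope.

Definition rr (f mu xi : R) : R := f * (mu * cos xi + sqrt (2 - (cos xi) ^ 2)).

Definition gx (f mu : R) (xi : R) : R := rr f mu xi * cos xi.
Definition gy (f mu : R) (xi : R) : R := rr f mu xi * sin xi.

Definition speed (X Y : R -> R) (t : R) : R :=
  sqrt (Derive X t ^ 2 + Derive Y t ^ 2).

Definition curvature (X Y : R -> R) (t : R) : R :=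
  (Derive X t * Derive (Derive Y) t - Derive Y t * Derive (Derive X) t)
  / (speed X Y t) ^ 3.

Definition tangent_x (X Y : R -> R) (t : R) : R := Derive X t / speed X Y t.
Definition tangent_y (X Y : R -> R) (t : R) : R := Derive Y t / speed X Y t.

(* center of the circle of curvature: gamma + (1/k) N, where N = (-T_y, T_x)
   is the left unit normal; with signed k this lies on the side of curvature,
   at distance 1/|k|. *)
Definition center_x (X Y : R -> R) (t : R) : R :=
  X t - tangent_y X Y t / curvature X Y t.
Definition center_y (X Y : R -> R) (t : R) : R :=
  Y t + tangent_x X Y t / curvature X Y t.

Definition arclen (X Y : R -> R) (t : R) : R := RInt (speed X Y) 0 t.

Definition Rsgn (x : R) : R :=
  if Rlt_dec 0 x then 1 else if Rlt_dec x 0 then -1 else 0.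

From Stdlib Require Import Reals Lra Psatz.
From Coquelicot Require Import Coquelicot.
Open Scope R_scope.

(* In polar form the curve is [r = f * rad mu xi], and with [r'], [r''] its derivatives
   the polar formulas give speed^2 = r^2 + r'^2 and k * speed^3 = r^2 + 2 r'^2 - r r''.
   At xi = 0 and xi = PI we have sin xi = r' = 0, so the curve crosses the x-axis
   perpendicularly there and (i), (ii) are direct evaluations.
   For (iii), with u = cos xi and q = sqrt (2 - u^2), the curvature is
   kappa(u) / |f|, and kappa'(u) has the sign of -mu (u + mu q), i.e. of -mu when
   |mu| > 1; as cos decreases on [0, PI] and arc length increases, k is monotone in
   arc length. The total turning is the increment of the tangent angle
   xi + arg (r', r) over [0, PI]; when |mu| > 1 the sign of r' is constant on the arc,
   so the argument has a smooth branch, and its endpoint values are +-PI/2 according to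
   the signs of rad 0 = mu + 1 and rad PI = 1 - mu. *)

Lemma sin2_add_cos2 t : sin t ^ 2 + cos t ^ 2 = 1.
Proof. rewrite <- !Rsqr_pow2. apply sin2_cos2. Qed.

Lemma sqrt_pow2_abs a : sqrt (a ^ 2) = Rabs a.
Proof. rewrite <- Rsqr_pow2. apply sqrt_Rsqr_abs. Qed.

Lemma Rsgn_pos x : 0 < x -> Rsgn x = 1.
Proof. intros h. unfold Rsgn. destruct (Rlt_dec 0 x); [reflexivity | lra]. Qed.

Lemma Rsgn_neg x : x < 0 -> Rsgn x = -1.
Proof.
  intros h. unfold Rsgn.
  destruct (Rlt_dec 0 x); [lra |]. destruct (Rlt_dec x 0); [reflexivity | lra].
Qed.

Lemma cos_sin_PI2_Rsgn a : a <> 0 ->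
  cos (PI / 2 * Rsgn a) = 0 /\ sin (PI / 2 * Rsgn a) = a / Rabs a.
Proof.
  intros ha. destruct (Rlt_or_le 0 a) as [hp | hn].
  - rewrite Rsgn_pos, Rmult_1_r, cos_PI2, sin_PI2, Rabs_right by lra.
    split; [reflexivity | field; exact ha].
  - rewrite Rsgn_neg, Rabs_left by lra.
    replace (PI / 2 * -1) with (- (PI / 2)) by ring.
    rewrite cos_neg, sin_neg, cos_PI2, sin_PI2. split; [reflexivity | field; lra].
Qed.

Lemma arclen_le_inv (X Y : R -> R) a b :
  (forall t, continuous (speed X Y) t) -> (forall t, 0 < speed X Y t) ->
  arclen X Y a <= arclen X Y b -> a <= b.
Proof.
  intros hc hpos hab. destruct (Rle_lt_dec a b) as [h | h]; [exact h | exfalso].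
  assert (hint : forall u v, ex_RInt (speed X Y) u v)
    by (intros u v; apply (ex_RInt_continuous (V := R_CompleteNormedModule)); intros z _; apply hc).
  assert (hba : 0 < RInt (speed X Y) b a)
    by (apply RInt_gt_0; [exact h | intros; apply hpos | intros; apply hc]).
  unfold arclen in hab. rewrite <- (RInt_Chasles _ 0 b a (hint 0 b) (hint b a)) in hab.
  change plus with Rplus in hab. lra.
Qed.

Definition polar_x (rho : R -> R) (t : R) : R := rho t * cos t.
Definition polar_y (rho : R -> R) (t : R) : R := rho t * sin t.

Definition polar_turning_rate (p p1 p2 : R) : R :=
  (p ^ 2 + 2 * p1 ^ 2 - p * p2) / (p ^ 2 + p1 ^ 2).

Lemma polar_turning_rate_scal c p p1 p2 : c <> 0 -> 0 < p ^ 2 + p1 ^ 2 ->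
  polar_turning_rate (c * p) (c * p1) (c * p2) = polar_turning_rate p p1 p2.
Proof.
  intros hc hD. unfold polar_turning_rate.
  replace ((c * p) ^ 2 + (c * p1) ^ 2) with (c ^ 2 * (p ^ 2 + p1 ^ 2)) by ring.
  assert (0 < c ^ 2) by (apply pow2_gt_0, hc).
  field. split; lra.
Qed.

(* The half-angle form of the argument of [(x, y)]: a smooth branch of [atan2]
   off the ray [y = 0, x <= 0]. *)
Definition polar_angle (x y : R) : R := 2 * atan (y / (sqrt (x ^ 2 + y ^ 2) + x)).

Lemma is_derive_polar_angle (x y : R -> R) t dx dy :
  is_derive x t dx -> is_derive y t dy -> 0 < sqrt (x t ^ 2 + y t ^ 2) + x t ->
  is_derive (fun t => polar_angle (x t) (y t)) t
    ((x t * dy - y t * dx) / (x t ^ 2 + y t ^ 2)).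
Proof.
  intros hx hy hS. unfold polar_angle.
  assert (hD : 0 < x t ^ 2 + y t ^ 2).
  { destruct (Req_dec (x t ^ 2 + y t ^ 2) 0) as [h0 | h0]; [| nra].
    rewrite h0, sqrt_0 in hS. nra. }
  auto_derive;
    replace (x t * (x t * 1) + y t * (y t * 1)) with (x t ^ 2 + y t ^ 2) by ring.
  - repeat split; try (eexists; eassumption); lra.
  - replace (Derive (fun u : R => x u) t) with dx by (symmetry; apply is_derive_unique, hx).
    replace (Derive (fun u : R => y u) t) with dy by (symmetry; apply is_derive_unique, hy).
    set (a := x t) in *. set (b := y t) in *. set (n := sqrt (a ^ 2 + b ^ 2)) in *.
    assert (hS2 : n ^ 2 = a ^ 2 + b ^ 2) by (apply pow2_sqrt; lra).
    assert (hS0 : 0 < n) by (apply sqrt_lt_R0, hD).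
    assert (hden : 1 + b * / (n + a) * (b * / (n + a) * 1) = 2 * n / (n + a)).
    { replace (b * / (n + a) * (b * / (n + a) * 1)) with (b ^ 2 / (n + a) ^ 2)
        by (field; lra).
      replace (b ^ 2) with ((n - a) * (n + a)) by nra. field. lra. }
    rewrite hden, <- hS2.
    field_simplify; [| lra | split; lra].
    replace (b ^ 2) with (n ^ 2 - a ^ 2) by lra. field. split; [lra | nra].
Qed.

Lemma polar_angle_0_l y : y <> 0 -> polar_angle 0 y = PI / 2 * Rsgn y.
Proof.
  intros hy. unfold polar_angle.
  replace (0 ^ 2 + y ^ 2) with (y ^ 2) by ring. rewrite sqrt_pow2_abs, Rplus_0_r.
  destruct (Rlt_or_le 0 y) as [hp | hn].
  - rewrite Rsgn_pos, Rabs_right by lra. replace (y / y) with 1 by (field; lra).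
    rewrite atan_1. field.
  - rewrite Rsgn_neg, Rabs_left by lra. replace (y / - y) with (Ropp 1) by (field; lra).
    rewrite atan_opp, atan_1. field.
Qed.

Section PolarCurve.

Variables rho rho1 rho2 : R -> R.
Hypothesis rho_derive : forall t, is_derive rho t (rho1 t).
Hypothesis rho1_derive : forall t, is_derive rho1 t (rho2 t).

Let ex_derive_rho t : ex_derive rho t := ex_intro _ _ (rho_derive t).
Let ex_derive_rho1 t : ex_derive rho1 t := ex_intro _ _ (rho1_derive t).

Lemma is_derive_polar_x t :
  is_derive (polar_x rho) t (rho1 t * cos t - rho t * sin t).
Proof.
  unfold polar_x. auto_derive; [apply ex_derive_rho |].
  replace (Derive (fun x : R => rho x) t) with (rho1 t)
    by (symmetry; apply is_derive_unique, rho_derive).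
  ring.
Qed.

Lemma is_derive_polar_y t :
  is_derive (polar_y rho) t (rho1 t * sin t + rho t * cos t).
Proof.
  unfold polar_y. auto_derive; [apply ex_derive_rho |].
  replace (Derive (fun x : R => rho x) t) with (rho1 t)
    by (symmetry; apply is_derive_unique, rho_derive).
  ring.
Qed.

Lemma Derive_polar_x t : Derive (polar_x rho) t = rho1 t * cos t - rho t * sin t.
Proof. apply is_derive_unique, is_derive_polar_x. Qed.

Lemma Derive_polar_y t : Derive (polar_y rho) t = rho1 t * sin t + rho t * cos t.
Proof. apply is_derive_unique, is_derive_polar_y. Qed.

Lemma Derive2_polar_x t :
  Derive (Derive (polar_x rho)) t
  = rho2 t * cos t - 2 * rho1 t * sin t - rho t * cos t.
Proof.
  rewrite (Derive_ext _ _ _ Derive_polar_x). apply is_derive_unique.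
  auto_derive; [repeat split; first [apply ex_derive_rho | apply ex_derive_rho1] |].
  replace (Derive (fun x : R => rho x) t) with (rho1 t)
    by (symmetry; apply is_derive_unique, rho_derive).
  replace (Derive (fun x : R => rho1 x) t) with (rho2 t)
    by (symmetry; apply is_derive_unique, rho1_derive).
  ring.
Qed.

Lemma Derive2_polar_y t :
  Derive (Derive (polar_y rho)) t
  = rho2 t * sin t + 2 * rho1 t * cos t - rho t * sin t.
Proof.
  rewrite (Derive_ext _ _ _ Derive_polar_y). apply is_derive_unique.
  auto_derive; [repeat split; first [apply ex_derive_rho | apply ex_derive_rho1] |].
  replace (Derive (fun x : R => rho x) t) with (rho1 t)
    by (symmetry; apply is_derive_unique, rho_derive).
  replace (Derive (fun x : R => rho1 x) t) with (rho2 t)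
    by (symmetry; apply is_derive_unique, rho1_derive).
  ring.
Qed.

Lemma speed_polar t :
  speed (polar_x rho) (polar_y rho) t = sqrt (rho t ^ 2 + rho1 t ^ 2).
Proof.
  unfold speed. rewrite Derive_polar_x, Derive_polar_y. f_equal.
  transitivity ((rho t ^ 2 + rho1 t ^ 2) * (sin t ^ 2 + cos t ^ 2)); [ring |].
  rewrite sin2_add_cos2. ring.
Qed.

Lemma curvature_polar t :
  curvature (polar_x rho) (polar_y rho) t
  = (rho t ^ 2 + 2 * rho1 t ^ 2 - rho t * rho2 t) / sqrt (rho t ^ 2 + rho1 t ^ 2) ^ 3.
Proof.
  unfold curvature. rewrite speed_polar, Derive_polar_x, Derive_polar_y,
    Derive2_polar_x, Derive2_polar_y. f_equal.
  transitivity ((rho t ^ 2 + 2 * rho1 t ^ 2 - rho t * rho2 t) * (sin t ^ 2 + cos t ^ 2));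
    [ring |].
  rewrite sin2_add_cos2. ring.
Qed.

Lemma curvature_mul_speed_polar t : 0 < rho t ^ 2 + rho1 t ^ 2 ->
  curvature (polar_x rho) (polar_y rho) t * speed (polar_x rho) (polar_y rho) t
  = polar_turning_rate (rho t) (rho1 t) (rho2 t).
Proof.
  intros hD. rewrite curvature_polar, speed_polar. unfold polar_turning_rate.
  assert (hS : 0 < sqrt (rho t ^ 2 + rho1 t ^ 2)) by (apply sqrt_lt_R0; exact hD).
  rewrite <- (pow2_sqrt (rho t ^ 2 + rho1 t ^ 2)) at 3 by lra.
  field. lra.
Qed.

Lemma continuous_speed_polar t : continuous (speed (polar_x rho) (polar_y rho)) t.
Proof.
  apply (continuous_ext (fun t => sqrt (rho t ^ 2 + rho1 t ^ 2))).
  { intros s. symmetry. apply speed_polar. }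
  apply continuous_sqrt_comp, (@ex_derive_continuous R_AbsRing R_NormedModule).
  auto_derive. repeat split; first [apply ex_derive_rho | apply ex_derive_rho1].
Qed.

Lemma polar_apse t : sin t = 0 -> rho1 t = 0 -> rho t <> 0 -> rho t <> rho2 t ->
  let X := polar_x rho in let Y := polar_y rho in
  speed X Y t = Rabs (rho t) /\
  tangent_x X Y t = 0 /\
  tangent_y X Y t = rho t * cos t / Rabs (rho t) /\
  curvature X Y t = (rho t - rho2 t) / (Rabs (rho t) * rho t) /\
  center_x X Y t = - cos t * rho t * rho2 t / (rho t - rho2 t) /\
  center_y X Y t = 0.
Proof.
  intros hs h1 h0 h02 X Y.
  assert (hsp : speed X Y t = Rabs (rho t)).
  { unfold X, Y. rewrite speed_polar, h1, <- sqrt_pow2_abs. f_equal. ring. }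
  assert (hA : 0 < Rabs (rho t)) by (apply Rabs_pos_lt, h0).
  assert (hk : curvature X Y t = (rho t - rho2 t) / (Rabs (rho t) * rho t)).
  { unfold X, Y. rewrite curvature_polar, h1.
    replace (rho t ^ 2 + 0 ^ 2) with (rho t ^ 2) by ring.
    rewrite sqrt_pow2_abs.
    replace (Rabs (rho t) ^ 3) with (rho t ^ 2 * Rabs (rho t)) by (rewrite <- pow2_abs; ring).
    field. lra. }
  assert (hd : rho t - rho2 t <> 0) by lra.
  unfold center_x, center_y, tangent_x, tangent_y.
  rewrite hk, hsp. unfold X, Y.
  rewrite Derive_polar_x, Derive_polar_y, h1, hs.
  unfold polar_x, polar_y. rewrite hs.
  repeat split; field; lra.
Qed.

(* [t + s * polar_angle (s * rho1 t) (rho t)] is the direction angle of the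
   tangent; the sign [s] keeps the branch cut of [polar_angle] off the arc. *)
Lemma is_derive_polar_turning s t :
  s * s = 1 -> 0 < sqrt ((s * rho1 t) ^ 2 + rho t ^ 2) + s * rho1 t ->
  is_derive (fun t => t + s * polar_angle (s * rho1 t) (rho t)) t
    (polar_turning_rate (rho t) (rho1 t) (rho2 t)).
Proof.
  intros hs hS.
  assert (hD : 0 < (s * rho1 t) ^ 2 + rho t ^ 2).
  { destruct (Req_dec ((s * rho1 t) ^ 2 + rho t ^ 2) 0) as [h0 | h0]; [| nra].
    rewrite h0, sqrt_0 in hS. nra. }
  assert (hs1 : is_derive (fun u => s * rho1 u) t (s * rho2 t))
    by (apply is_derive_scal, rho1_derive).
  assert (Ha := is_derive_polar_angle _ rho t _ _ hs1 (rho_derive t) hS).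
  assert (Hp := is_derive_plus _ _ _ _ _ (is_derive_id t) (is_derive_scal _ _ s _ Ha)).
  replace (polar_turning_rate (rho t) (rho1 t) (rho2 t))
    with (plus one (s * ((s * rho1 t * rho1 t - rho t * (s * rho2 t))
                         / ((s * rho1 t) ^ 2 + rho t ^ 2)))).
  - exact Hp.
  - change plus with Rplus. change one with 1. unfold polar_turning_rate.
    match goal with |- ?l = ?r => change (@eq R l r) end.
    replace ((s * rho1 t) ^ 2) with (s * s * rho1 t ^ 2) in hD |- * by ring.
    rewrite hs in hD |- *.
    replace (s * ((s * rho1 t * rho1 t - rho t * (s * rho2 t)) / (1 * rho1 t ^ 2 + rho t ^ 2)))
      with (s * s * ((rho1 t ^ 2 - rho t * rho2 t) / (rho1 t ^ 2 + rho t ^ 2)))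
      by (field; lra).
    rewrite hs. field. lra.
Qed.

End PolarCurve.

Definition qroot (u : R) : R := sqrt (2 - u ^ 2).

Lemma qroot_arg_pos u : -1 <= u <= 1 -> 0 < 2 - u ^ 2.
Proof. intros hu. nra. Qed.

Lemma qroot_sq u : -1 <= u <= 1 -> qroot u ^ 2 = 2 - u ^ 2.
Proof. intros hu. apply pow2_sqrt, Rlt_le, qroot_arg_pos, hu. Qed.

Lemma qroot_ge_1 u : -1 <= u <= 1 -> 1 <= qroot u.
Proof. intros hu. unfold qroot. rewrite <- sqrt_1. apply sqrt_le_1_alt. nra. Qed.

Lemma qroot_at_pm1 u : u * u = 1 -> qroot u = 1.
Proof. intros hu. unfold qroot. replace (2 - u ^ 2) with 1 by nra. apply sqrt_1. Qed.

Definition rad (mu t : R) : R := mu * cos t + qroot (cos t).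
Definition rad' (mu t : R) : R := sin t * (cos t / qroot (cos t) - mu).
Definition rad'' (mu t : R) : R :=
  cos t * (cos t / qroot (cos t) - mu) - 2 * sin t ^ 2 / qroot (cos t) ^ 3.

Lemma is_derive_rad mu t : is_derive (rad mu) t (rad' mu t).
Proof.
  pose proof (COS_bound t) as hc. pose proof (qroot_ge_1 _ hc) as hq.
  pose proof (qroot_arg_pos _ hc) as h2.
  unfold rad, rad', qroot in *. auto_derive;
    replace (2 + - (cos t * (cos t * 1))) with (2 - cos t ^ 2) by ring; [lra |].
  set (q := sqrt _) in *. field. lra.
Qed.

Lemma is_derive_rad' mu t : is_derive (rad' mu) t (rad'' mu t).
Proof.
  pose proof (COS_bound t) as hc. pose proof (qroot_ge_1 _ hc) as hq.
  pose proof (qroot_arg_pos _ hc) as h2. pose proof (qroot_sq _ hc) as hq2.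
  unfold rad', rad'', qroot in *. auto_derive;
    replace (2 + - (cos t * (cos t * 1))) with (2 - cos t ^ 2) by ring;
    [repeat split; lra |].
  set (q := sqrt _) in *.
  replace (2 * sin t ^ 2) with ((q ^ 2 + cos t ^ 2) * sin t ^ 2) by (rewrite hq2; ring).
  field. lra.
Qed.

Lemma rad_apse mu t e : cos t = e -> sin t = 0 -> e * e = 1 ->
  rad mu t = mu * e + 1 /\ rad' mu t = 0 /\ rad'' mu t = 1 - mu * e.
Proof.
  intros hc hs he. unfold rad, rad', rad''.
  rewrite hc, hs, qroot_at_pm1 by exact he.
  repeat split; field_simplify; lra.
Qed.

(* The cofactors [cert] supplied below are the quotients of [lhs - rhs] by
   [q ^ 2 - (2 - c ^ 2)], obtained by polynomial division in [q]. *)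
Lemma eq_mod_qroot_rel (q c lhs rhs cert : R) : q ^ 2 = 2 - c ^ 2 ->
  lhs - rhs = (q ^ 2 - (2 - c ^ 2)) * cert -> lhs = rhs.
Proof. intros hq hcert. rewrite hq in hcert. lra. Qed.

Definition kappa_num (mu u : R) : R :=
  2 * mu * (3 * u - 2 * u ^ 3) + qroot u * (4 * mu ^ 2 + 6 - (2 * mu ^ 2 + 6) * u ^ 2).
Definition kappa_den (mu u : R) : R :=
  mu ^ 2 * (2 - u ^ 2) + 4 - 3 * u ^ 2 + 2 * mu * u * qroot u.
Definition kappa (mu u : R) : R := kappa_num mu u / (kappa_den mu u * sqrt (kappa_den mu u)).

Lemma kappa_den_pos mu u : mu <> 1 -> mu <> -1 -> -1 <= u <= 1 -> 0 < kappa_den mu u.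
Proof.
  intros h1 h2 hu. pose proof (qroot_sq u hu) as hq. pose proof (qroot_ge_1 u hu).
  assert (hE : kappa_den mu u = (mu * qroot u + u) ^ 2 + 4 * (1 - u ^ 2))
    by (unfold kappa_den; rewrite <- hq; ring).
  rewrite hE. destruct (Rlt_or_le (u ^ 2) 1) as [hl | hl].
  { pose proof (pow2_ge_0 (mu * qroot u + u)). lra. }
  assert (hu1 : u * u = 1) by nra.
  rewrite (qroot_at_pm1 u hu1).
  assert (hsq : 0 < (mu + u) ^ 2).
  { apply pow2_gt_0. intros h. assert (u = 1 \/ u = -1) as [-> | ->] by nra; lra. }
  replace (mu * 1 + u) with (mu + u) by ring. nra.
Qed.

Lemma rad_speed2 mu t :
  (rad mu t ^ 2 + rad' mu t ^ 2) * qroot (cos t) ^ 2 = kappa_den mu (cos t).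
Proof.
  pose proof (COS_bound t) as hc. pose proof (qroot_ge_1 _ hc).
  pose proof (qroot_sq _ hc) as hq. pose proof (sin2_add_cos2 t).
  unfold rad, rad', kappa_den. rewrite Rpow_mult_distr.
  set (q := qroot (cos t)) in *. set (c := cos t) in *.
  replace (sin t ^ 2) with (1 - c ^ 2) by lra.
  apply (eq_mod_qroot_rel q c _ _ (2 + q ^ 2 - c ^ 2 + 2 * mu * c * q + mu ^ 2) hq).
  field. lra.
Qed.
Lemma rad_num mu t :
  (rad mu t ^ 2 + 2 * rad' mu t ^ 2 - rad mu t * rad'' mu t) * qroot (cos t) ^ 3
  = kappa_num mu (cos t).
Proof.
  pose proof (COS_bound t) as hc. pose proof (qroot_ge_1 _ hc).
  pose proof (qroot_sq _ hc) as hq. pose proof (sin2_add_cos2 t).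
  unfold rad, rad', rad'', kappa_num. rewrite Rpow_mult_distr.
  set (q := qroot (cos t)) in *. set (c := cos t) in *.
  replace (sin t ^ 2) with (1 - c ^ 2) by lra.
  apply (eq_mod_qroot_rel q c _ _
    (2 * q + q ^ 3 - 2 * c ^ 2 * q + 2 * mu * c + 3 * mu * c * q ^ 2 + 2 * mu ^ 2 * q) hq).
  field. lra.
Qed.

Lemma rad_speed2_pos mu t : mu <> 1 -> mu <> -1 -> 0 < rad mu t ^ 2 + rad' mu t ^ 2.
Proof.
  intros h1 h2. pose proof (COS_bound t) as hc. pose proof (qroot_ge_1 _ hc).
  pose proof (kappa_den_pos mu _ h1 h2 hc) as hE. rewrite <- rad_speed2 in hE. nra.
Qed.

Lemma is_derive_div_pow_3_2 (p e : R -> R) u dp de :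
  is_derive p u dp -> is_derive e u de -> 0 < e u ->
  is_derive (fun u => p u / (e u * sqrt (e u))) u
    ((2 * dp * e u - 3 * p u * de) / (2 * e u ^ 2 * sqrt (e u))).
Proof.
  intros hp he hpos.
  assert (hw : 0 < sqrt (e u)) by (apply sqrt_lt_R0, hpos).
  assert (hw2 : sqrt (e u) ^ 2 = e u) by (apply pow2_sqrt; lra).
  auto_derive.
  - repeat split; try (eexists; eassumption); try lra; apply Rgt_not_eq; nra.
  - replace (Derive (fun x => p x) u) with dp by (symmetry; apply is_derive_unique, hp).
    replace (Derive (fun x => e x) u) with de by (symmetry; apply is_derive_unique, he).
    set (w := sqrt (e u)) in *. rewrite <- hw2. field. lra.
Qed.

Definition kappa_num' (mu u : R) : R :=
  2 * mu * (3 - 6 * u ^ 2) - u / qroot u * (4 * mu ^ 2 + 6 - (2 * mu ^ 2 + 6) * u ^ 2)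
  - 2 * (2 * mu ^ 2 + 6) * u * qroot u.
Definition kappa_den' (mu u : R) : R :=
  - 2 * mu ^ 2 * u - 6 * u + 2 * mu * qroot u - 2 * mu * u ^ 2 / qroot u.

Lemma is_derive_kappa_num mu u : -1 <= u <= 1 -> is_derive (kappa_num mu) u (kappa_num' mu u).
Proof.
  intros hu. pose proof (qroot_arg_pos u hu). pose proof (qroot_ge_1 u hu).
  unfold kappa_num, kappa_num', qroot in *. auto_derive;
    replace (2 + - (u * (u * 1))) with (2 - u ^ 2) by ring; [repeat split; lra |].
  set (q := sqrt _) in *. field. lra.
Qed.

Lemma is_derive_kappa_den mu u : -1 <= u <= 1 -> is_derive (kappa_den mu) u (kappa_den' mu u).
Proof.
  intros hu. pose proof (qroot_arg_pos u hu). pose proof (qroot_ge_1 u hu).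
  unfold kappa_den, kappa_den', qroot in *. auto_derive;
    replace (2 + - (u * (u * 1))) with (2 - u ^ 2) by ring; [repeat split; lra |].
  set (q := sqrt _) in *. field. lra.
Qed.

Lemma is_derive_kappa mu u : mu <> 1 -> mu <> -1 -> -1 <= u <= 1 ->
  is_derive (kappa mu) u
    (- 12 * (1 + mu ^ 2) * (u + mu * qroot u)
     / (qroot u * kappa_den mu u ^ 2 * sqrt (kappa_den mu u))).
Proof.
  intros h1 h2 hu.
  pose proof (kappa_den_pos mu u h1 h2 hu) as hE.
  pose proof (qroot_ge_1 u hu). pose proof (qroot_sq u hu) as hq.
  assert (hw : 0 < sqrt (kappa_den mu u)) by (apply sqrt_lt_R0, hE).
  assert (hG : qroot u * (2 * kappa_num' mu u * kappa_den mu u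
                          - 3 * kappa_num mu u * kappa_den' mu u)
               = - 24 * (1 + mu ^ 2) * (u + mu * qroot u)).
  { unfold kappa_num', kappa_den', kappa_num, kappa_den.
    set (q := qroot u) in *.
    apply (eq_mod_qroot_rel q u _ _
      (12 * u - 36 * u ^ 3 - 36 * mu * q - 12 * mu * u ^ 2 * q + 16 * mu ^ 2 * u
       - 48 * mu ^ 2 * u ^ 3 - 24 * mu ^ 3 * q - 4 * mu ^ 3 * u ^ 2 * q + 8 * mu ^ 4 * u
       - 4 * mu ^ 4 * u ^ 3) hq).
    field. lra. }
  replace (- 12 * (1 + mu ^ 2) * (u + mu * qroot u)
           / (qroot u * kappa_den mu u ^ 2 * sqrt (kappa_den mu u)))
    with ((2 * kappa_num' mu u * kappa_den mu u - 3 * kappa_num mu u * kappa_den' mu u)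
          / (2 * kappa_den mu u ^ 2 * sqrt (kappa_den mu u))).
  - exact (is_derive_div_pow_3_2 _ _ u _ _
      (is_derive_kappa_num mu u hu) (is_derive_kappa_den mu u hu) hE).
  - replace (- 12 * (1 + mu ^ 2) * (u + mu * qroot u))
      with (/ 2 * (- 24 * (1 + mu ^ 2) * (u + mu * qroot u))) by field.
    rewrite <- hG. field. repeat split; lra.
Qed.

Lemma kappa_slope_sign mu u : 1 < Rabs mu -> -1 <= u <= 1 -> 0 < mu * (u + mu * qroot u).
Proof.
  intros hm hu. pose proof (qroot_ge_1 u hu).
  destruct (Rlt_or_le 0 mu) as [hp | hn].
  - rewrite Rabs_right in hm by lra. nra.
  - rewrite Rabs_left1 in hm by lra. nra.
Qed.

Lemma kappa_strict_mono mu x y : 1 < Rabs mu -> -1 <= x -> x < y -> y <= 1 ->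
  mu * (kappa mu y - kappa mu x) < 0.
Proof.
  intros hm hx hxy hy.
  assert (h1 : mu <> 1) by (intros ->; rewrite Rabs_R1 in hm; lra).
  assert (h2 : mu <> -1) by (intros ->; rewrite Rabs_left in hm; lra).
  cut (- mu * kappa mu x < - mu * kappa mu y); [intros; nra |].
  apply (incr_function_le (fun u => - mu * kappa mu u) (Finite (-1)) (Finite 1)
    (fun u => - mu * (- 12 * (1 + mu ^ 2) * (u + mu * qroot u)
                      / (qroot u * kappa_den mu u ^ 2 * sqrt (kappa_den mu u)))));
    try (simpl; lra); intros u hu1 hu2; simpl in hu1, hu2.
  - apply is_derive_scal, is_derive_kappa; auto.
  - pose proof (kappa_slope_sign mu u hm (conj hu1 hu2)).
    pose proof (qroot_ge_1 u (conj hu1 hu2)).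
    pose proof (kappa_den_pos mu u h1 h2 (conj hu1 hu2)) as hE.
    assert (0 < sqrt (kappa_den mu u)) by (apply sqrt_lt_R0, hE).
    assert (0 < qroot u * kappa_den mu u ^ 2 * sqrt (kappa_den mu u))
      by (repeat apply Rmult_lt_0_compat; try apply pow_lt; lra).
    replace (- mu * (- 12 * (1 + mu ^ 2) * (u + mu * qroot u)
                      / (qroot u * kappa_den mu u ^ 2 * sqrt (kappa_den mu u))))
      with (12 * (1 + mu ^ 2) * (mu * (u + mu * qroot u))
            / (qroot u * kappa_den mu u ^ 2 * sqrt (kappa_den mu u))) by (field; lra).
    apply Rdiv_lt_0_compat; [| lra].
    apply Rmult_lt_0_compat; [pose proof (pow2_ge_0 mu) |]; lra.
Qed.

Lemma ex_derive_rad'' mu t : ex_derive (rad'' mu) t.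
Proof.
  pose proof (COS_bound t) as hc. pose proof (qroot_ge_1 _ hc).
  pose proof (qroot_arg_pos _ hc).
  unfold rad'', qroot in *. auto_derive.
  replace (2 + - (cos t * (cos t * 1))) with (2 - cos t ^ 2) by ring.
  repeat split; try lra. apply Rgt_not_eq. repeat apply Rmult_lt_0_compat; lra.
Qed.

Lemma continuous_rad_turning_rate mu t : mu <> 1 -> mu <> -1 ->
  continuous (fun t => polar_turning_rate (rad mu t) (rad' mu t) (rad'' mu t)) t.
Proof.
  intros h1 h2. pose proof (rad_speed2_pos mu t h1 h2).
  apply (@ex_derive_continuous R_AbsRing R_NormedModule).
  unfold polar_turning_rate. auto_derive.
  repeat split; try lra;
    first [exists (rad' mu t); apply is_derive_rad | exists (rad'' mu t); apply is_derive_rad'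
          | apply ex_derive_rad''].
Qed.

Lemma rad'_sign mu s t : s * s = 1 -> 1 < - (s * mu) -> 0 <= t <= PI -> 0 <= s * rad' mu t.
Proof.
  intros hs hsm ht. pose proof (COS_bound t) as hc. pose proof (qroot_ge_1 _ hc).
  assert (hsin : 0 <= sin t) by (apply sin_ge_0; lra).
  assert (hcq : -1 <= cos t / qroot (cos t) <= 1).
  { split; [apply Rcomplements.Rle_div_r | apply Rcomplements.Rle_div_l]; lra. }
  assert (s = 1 \/ s = -1) as [-> | ->] by (assert ((s - 1) * (s + 1) = 0) as h by lra;
    apply Rmult_integral in h as [h | h]; lra);
    unfold rad'; nra.
Qed.

Lemma is_RInt_rad_turning_rate mu : 1 < Rabs mu ->
  is_RInt (fun t => polar_turning_rate (rad mu t) (rad' mu t) (rad'' mu t)) 0 PI (2 * PI).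
Proof.
  intros hm. pose proof PI_RGT_0.
  assert (h1 : mu <> 1) by (intros ->; rewrite Rabs_R1 in hm; lra).
  assert (h2 : mu <> -1) by (intros ->; rewrite Rabs_left in hm; lra).
  assert (exists s, s * s = 1 /\ 1 < - (s * mu)) as (s & hs & hsm).
  { destruct (Rlt_or_le 0 mu).
    - exists (-1). rewrite Rabs_right in hm by lra. split; lra.
    - exists 1. rewrite Rabs_left1 in hm by lra. split; lra. }
  set (F t := t + s * polar_angle (s * rad' mu t) (rad mu t)).
  replace (2 * PI) with (minus (F PI) (F 0)).
  - apply (@is_RInt_derive R_CompleteNormedModule F); intros t ht;
      rewrite Rmin_left, Rmax_right in ht by lra.
    + apply (is_derive_polar_turning (rad mu) (rad' mu) (rad'' mu) (is_derive_rad mu)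
        (is_derive_rad' mu) s t hs).
      pose proof (rad_speed2_pos mu t h1 h2).
      pose proof (rad'_sign mu s t hs hsm ht).
      assert (0 < sqrt ((s * rad' mu t) ^ 2 + rad mu t ^ 2))
        by (apply sqrt_lt_R0; replace ((s * rad' mu t) ^ 2) with (s * s * rad' mu t ^ 2) by ring;
            rewrite hs; lra).
      lra.
    + apply continuous_rad_turning_rate; assumption.
  - destruct (rad_apse mu 0 1 cos_0 sin_0 ltac:(ring)) as (hr0 & hr0' & _).
    destruct (rad_apse mu PI (-1) cos_PI sin_PI ltac:(ring)) as (hpi & hpi' & _).
    unfold F. rewrite hr0, hr0', hpi, hpi', Rmult_0_r, !polar_angle_0_l by lra.
    change minus with Rminus. match goal with |- ?l = ?r => change (@eq R l r) end.
    assert (s = 1 \/ s = -1) as [-> | ->] by (assert ((s - 1) * (s + 1) = 0) as h by lra;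
      apply Rmult_integral in h as [h | h]; lra).
    + rewrite Rsgn_pos, Rsgn_neg by lra. field.
    + rewrite Rsgn_neg, Rsgn_pos by lra. field.
Qed.

Section Curve.

Variables f mu : R.
Hypothesis hf : f <> 0.

Let rho t := f * rad mu t.
Let rho1 t := f * rad' mu t.
Let rho2 t := f * rad'' mu t.

Let rho_derive t : is_derive rho t (rho1 t).
Proof. apply is_derive_scal, is_derive_rad. Qed.

Let rho1_derive t : is_derive rho1 t (rho2 t).
Proof. apply is_derive_scal, is_derive_rad'. Qed.

Lemma gx_polar : gx f mu = polar_x rho.
Proof. reflexivity. Qed.

Lemma gy_polar : gy f mu = polar_y rho.
Proof. reflexivity. Qed.

Lemma curve_at_apse t e : cos t = e -> sin t = 0 -> e * e = 1 ->
  mu <> 0 -> mu + e <> 0 ->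
  let X := gx f mu in let Y := gy f mu in let a := f * (mu + e) in
  (X t = a /\ Y t = 0 /\ speed X Y t <> 0 /\
   tangent_x X Y t = cos (PI / 2 * Rsgn a) /\
   tangent_y X Y t = sin (PI / 2 * Rsgn a) /\
   curvature X Y t = 2 * mu / (Rabs f * Rabs (mu + e) * (mu + e))) /\
  center_x X Y t = f * (mu ^ 2 - 1) / (2 * mu) /\ center_y X Y t = 0.
Proof.
  intros hc hs he hmu0 hme X Y a.
  destruct (rad_apse mu t e hc hs he) as (h0 & h1 & h2).
  assert (hrho : rho t = e * a).
  { unfold rho, a. rewrite h0. replace (mu * e + 1) with (mu * e + e * e) by lra. ring. }
  assert (ha : a <> 0) by (apply Rmult_integral_contrapositive; tauto).
  assert (he0 : e <> 0) by (intros ->; lra).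
  assert (hrho0 : rho t <> 0) by (rewrite hrho; apply Rmult_integral_contrapositive; tauto).
  assert (hrho2 : rho t - rho2 t = 2 * f * mu * e) by (unfold rho, rho2; rewrite h0, h2; ring).
  assert (habs : Rabs (rho t) = Rabs a).
  { rewrite hrho, Rabs_mult. replace (Rabs e) with 1; [ring |].
    destruct (Rle_or_lt 0 e); [rewrite Rabs_right | rewrite Rabs_left]; nra. }
  assert (hrho1 : rho1 t = 0) by (unfold rho1; rewrite h1; ring).
  assert (hneq : rho t <> rho2 t).
  { intros h. rewrite h, Rminus_diag in hrho2. symmetry in hrho2.
    repeat apply Rmult_integral in hrho2 as [hrho2 | hrho2]; lra. }
  destruct (polar_apse rho rho1 rho2 rho_derive rho1_derive t hs hrho1 hrho0 hneq)
    as (hsp & htx & hty & hk & hcx & hcy).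
  destruct (cos_sin_PI2_Rsgn a ha) as [hcos hsin].
  unfold X, Y. rewrite gx_polar, gy_polar.
  rewrite hsp, htx, hty, hk, hcx, hcy, habs, hrho2, hcos, hsin, hc.
  unfold polar_x, polar_y. rewrite hc, hs, hrho.
  unfold rho2, a. rewrite h2, Rabs_mult.
  assert (hfa : Rabs f <> 0) by (apply Rabs_no_R0, hf).
  assert (hma : Rabs (mu + e) <> 0) by (apply Rabs_no_R0, hme).
  assert (hpm : e = 1 \/ e = -1).
  { assert (h : (e - 1) * (e + 1) = 0) by lra.
    apply Rmult_integral in h as [h | h]; [left | right]; lra. }
  destruct hpm as [-> | ->]; repeat split; try field; repeat split; try assumption;
    apply Rmult_integral_contrapositive; tauto.
Qed.

Hypothesis hmu1 : mu <> 1.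
Hypothesis hmum1 : mu <> -1.

Let sqrt_rho_speed2 t :
  sqrt (rho t ^ 2 + rho1 t ^ 2) = Rabs f * sqrt (kappa_den mu (cos t)) / qroot (cos t).
Proof.
  pose proof (qroot_ge_1 _ (COS_bound t)).
  pose proof (kappa_den_pos mu _ hmu1 hmum1 (COS_bound t)).
  transitivity (sqrt ((Rabs f / qroot (cos t)) ^ 2 * kappa_den mu (cos t))).
  - f_equal. unfold rho, rho1. rewrite <- rad_speed2.
    replace ((Rabs f / qroot (cos t)) ^ 2) with (f ^ 2 / qroot (cos t) ^ 2)
      by (rewrite <- (pow2_abs f); field; lra).
    field. lra.
  - rewrite sqrt_mult_alt by apply pow2_ge_0.
    rewrite sqrt_pow2 by (apply Rcomplements.Rdiv_le_0_compat; [apply Rabs_pos | lra]).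
    field. lra.
Qed.

Lemma curvature_eq_kappa t : curvature (gx f mu) (gy f mu) t = kappa mu (cos t) / Rabs f.
Proof.
  pose proof (qroot_ge_1 _ (COS_bound t)).
  pose proof (kappa_den_pos mu _ hmu1 hmum1 (COS_bound t)) as hE.
  assert (hw : 0 < sqrt (kappa_den mu (cos t))) by (apply sqrt_lt_R0, hE).
  assert (hw2 : sqrt (kappa_den mu (cos t)) ^ 2 = kappa_den mu (cos t)) by (apply pow2_sqrt; lra).
  assert (hfa : 0 < Rabs f) by (apply Rabs_pos_lt, hf).
  rewrite gx_polar, gy_polar, (curvature_polar rho rho1 rho2 rho_derive rho1_derive),
    sqrt_rho_speed2.
  unfold rho, rho1, rho2, kappa.
  replace ((f * rad mu t) ^ 2 + 2 * (f * rad' mu t) ^ 2 - f * rad mu t * (f * rad'' mu t))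
    with (Rabs f ^ 2 * kappa_num mu (cos t) / qroot (cos t) ^ 3)
    by (rewrite <- rad_num, pow2_abs; field; lra).
  set (w := sqrt (kappa_den mu (cos t))) in *. rewrite <- hw2. field. lra.
Qed.

Lemma speed_curve_pos t : 0 < speed (gx f mu) (gy f mu) t.
Proof.
  rewrite gx_polar, gy_polar, (speed_polar rho rho1 rho_derive).
  apply sqrt_lt_R0. unfold rho, rho1.
  pose proof (rad_speed2_pos mu t hmu1 hmum1). pose proof (pow2_gt_0 f hf). nra.
Qed.

Lemma curvature_curve_mono t1 t2 : 1 < Rabs mu -> 0 <= t1 -> t1 <= t2 -> t2 <= PI ->
  0 <= mu * (curvature (gx f mu) (gy f mu) t2 - curvature (gx f mu) (gy f mu) t1).
Proof.
  intros hm h1 h12 h2. rewrite !curvature_eq_kappa.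
  destruct (Req_dec t1 t2) as [<- | hne]; [lra |].
  assert (hcos : cos t2 < cos t1) by (apply cos_decreasing_1; lra).
  pose proof (kappa_strict_mono mu _ _ hm (proj1 (COS_bound t2)) hcos (proj2 (COS_bound t1))).
  assert (hfa : 0 < Rabs f) by (apply Rabs_pos_lt, hf).
  replace (mu * (kappa mu (cos t2) / Rabs f - kappa mu (cos t1) / Rabs f))
    with (- (mu * (kappa mu (cos t1) - kappa mu (cos t2))) / Rabs f) by (field; lra).
  apply Rlt_le, Rdiv_lt_0_compat; lra.
Qed.

Lemma curvature_monotone_in_arclen : 1 < Rabs mu ->
  let X := gx f mu in let Y := gy f mu in let k := curvature X Y in
  (forall a b, 0 <= a <= PI -> 0 <= b <= PI -> arclen X Y a <= arclen X Y b -> k a <= k b) \/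
  (forall a b, 0 <= a <= PI -> 0 <= b <= PI -> arclen X Y a <= arclen X Y b -> k b <= k a).
Proof.
  intros hm X Y k. unfold k, X, Y.
  assert (hab : forall a b,
    arclen (gx f mu) (gy f mu) a <= arclen (gx f mu) (gy f mu) b -> a <= b).
  { intros a b. apply arclen_le_inv; [| apply speed_curve_pos].
    intros t. rewrite gx_polar, gy_polar.
    apply (continuous_speed_polar rho rho1 rho2 rho_derive rho1_derive). }
  assert (hmu0 : mu <> 0) by (intros ->; rewrite Rabs_R0 in hm; lra).
  destruct (Rdichotomy mu 0 hmu0); [right | left]; intros a b ha hb hl;
    pose proof (curvature_curve_mono a b hm (proj1 ha) (hab a b hl) (proj2 hb)); nra.
Qed.

Lemma total_turning : 1 < Rabs mu ->
  is_RInt (fun t => curvature (gx f mu) (gy f mu) t * speed (gx f mu) (gy f mu) t) 0 PI (2 * PI).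
Proof.
  intros hm. apply (is_RInt_ext (fun t => polar_turning_rate (rad mu t) (rad' mu t) (rad'' mu t))).
  - intros t _. pose proof (rad_speed2_pos mu t hmu1 hmum1).
    rewrite gx_polar, gy_polar, (curvature_mul_speed_polar rho rho1 rho2 rho_derive rho1_derive).
    + symmetry. apply polar_turning_rate_scal; assumption.
    + unfold rho, rho1. pose proof (pow2_gt_0 f hf). nra.
  - apply is_RInt_rad_turning_rate, hm.
Qed.

End Curve.

Theorem mainTheorem1 (f mu : R) (hf : f <> 0)
  (hmu0 : mu <> 0) (hmu1 : mu <> 1) (hmum1 : mu <> -1) :
  let X := gx f mu in
  let Y := gy f mu in
  let k := curvature X Y in
  (X 0 = f * (mu + 1) /\ Y 0 = 0 /\
   speed X Y 0 <> 0 /\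
   tangent_x X Y 0 = cos (PI / 2 * Rsgn (f * (mu + 1))) /\
   tangent_y X Y 0 = sin (PI / 2 * Rsgn (f * (mu + 1))) /\
   k 0 = 2 * mu / (Rabs f * Rabs (mu + 1) * (mu + 1))) /\
  (X PI = f * (mu - 1) /\ Y PI = 0 /\
   speed X Y PI <> 0 /\
   tangent_x X Y PI = cos (PI / 2 * Rsgn (f * (mu - 1))) /\
   tangent_y X Y PI = sin (PI / 2 * Rsgn (f * (mu - 1))) /\
   k PI = 2 * mu / (Rabs f * Rabs (mu - 1) * (mu - 1))) /\
  (center_x X Y 0 = f * (mu ^ 2 - 1) / (2 * mu) /\ center_y X Y 0 = 0 /\
   center_x X Y PI = f * (mu ^ 2 - 1) / (2 * mu) /\ center_y X Y PI = 0) /\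
  (1 < Rabs mu ->
    ((forall a b, 0 <= a <= PI -> 0 <= b <= PI ->
        arclen X Y a <= arclen X Y b -> k a <= k b) \/
     (forall a b, 0 <= a <= PI -> 0 <= b <= PI ->
        arclen X Y a <= arclen X Y b -> k b <= k a)) /\
    is_RInt (fun xi => k xi * speed X Y xi) 0 PI (2 * PI)).
Proof.
  intros X Y k.
  destruct (curve_at_apse f mu hf 0 1 cos_0 sin_0 ltac:(ring) hmu0 ltac:(lra))
    as (at0 & c0x & c0y).
  destruct (curve_at_apse f mu hf PI (-1) cos_PI sin_PI ltac:(ring) hmu0 ltac:(lra))
    as (atPI & cPIx & cPIy).
  split; [exact at0 |]. split; [exact atPI |]. split; [tauto |].
  intros hm. split.
  - exact (curvature_monotone_in_arclen f mu hf hmu1 hmum1 hm).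
  - exact (total_turning f mu hf hmu1 hmum1 hm).
Qed.
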